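(* Let $\phi$ be a scoring rule such that there exists $g:[0,1]\to\mathbb{R}$ with $\phi(x,e_k)=g(x_k)$ for all $k\in\{1,\dots,K\}$ and all score vectors $x$. For each $k$ define $h_k(q):=-g(q)\,q$ (i.e. $h_k(p)=-\phi(p,e_k)p_k$, the $k$-th component of the negative entropy of $\phi$). Let $C=(C_1,\dots,C_K)$ with $C_k:=\mathbb{E}[Q_k\mid S_k]$. Then $$\mathrm{GL}(S):=\mathbb{E}[d_\phi(C,Q)]=\sum_{k=1}^K\mathbb{E}\big[\mathrm{Var}_{h_k}(Q_k\mid S_k)\big].$$
   Context: Let $(X,Y)$ be jointly distributed with $X\in\mathcal{X}$ and $Y\in\{e_1,\dots,e_K\}$ (one-hot vectors of $\mathbb{R}^K$); $Q_k:=P(Y=e_k\mid X)$; $S=(S_1,\dots,S_K)=f(X)$ in the probability simplex for a classifier $f$. For a scoring rule $\phi$, $s_\phi(P,q):=\sum_k\phi(P,e_k)q_k$ and $d_\phi(P,q):=s_\phi(P,q)-s_\phi(q,q)$. For $f:\mathbb{R}\to\mathbb{R}$, $\mathrm{Var}_f(U\mid V):=\mathbb{E}[f(U)\mid V]-f(\mathbb{E}[U\mid V])$. All required expectations are assumed to exist. *)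

From HB Require Import structures.
From mathcomp Require Import all_boot all_order all_algebra.
From mathcomp Require Import all_classical all_reals all_analysis.
Set Implicit Arguments. Unset Strict Implicit. Unset Printing Implicit Defensive.
Import Order.TTheory GRing.Theory Num.Theory.
Import numFieldNormedType.Exports.
Local Open Scope classical_set_scope.
Local Open Scope ring_scope.

Section Defs.
Context {R : realType}.

(* s_phi(P,q) := sum_k phi(P,e_k) q_k ; a scoring rule phi is represented as
   phi : ('I_K -> R) -> 'I_K -> R with  phi x k = phi(x, e_k). *)
Definition s_phi (K : nat) (phi : ('I_K -> R) -> 'I_K -> R)
  (P q : 'I_K -> R) : R := \sum_(k < K) phi P k * q k.

Definition d_phi (K : nat) (phi : ('I_K -> R) -> 'I_K -> R)
  (P q : 'I_K -> R) : R := s_phi phi P q - s_phi phi q q.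

(* Honest definition of (a version of) the conditional expectation
   E[U | V] for a real random variable U and a random variable V with values
   in a measurable space T' : W is sigma(V)-measurable (i.e. W = w o V with w
   measurable, Doob-Dynkin), integrable, and has the same integrals as U on
   every event of sigma(V). *)
Definition is_cond_exp {d} {T : measurableType d} {d'} {T' : measurableType d'}
  (P : probability T R) (V : T -> T') (U W : T -> R) : Prop :=
  P.-integrable setT (EFin \o U) /\
  P.-integrable setT (EFin \o W) /\
  (exists w : T' -> R, measurable_fun setT w /\ W = w \o V) /\
  (forall B : set T', measurable B ->
     (\int[P]_(x in V @^-1` B) (U x)%:E = \int[P]_(x in V @^-1` B) (W x)%:E)%E).

(* Var_f(U | V) := E[f(U) | V] - f(E[U | V]), given versions EfU of E[f(U)|V]
   and EU of E[U|V]. *)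
Definition Var_f {T : Type} (f : R -> R) (EfU EU : T -> R) : T -> R :=
  fun w => EfU w - f (EU w).

End Defs.

From HB Require Import structures.
From mathcomp Require Import all_boot all_order all_algebra.
From mathcomp Require Import all_classical all_reals all_analysis.
From mathcomp Require Import measurable_realfun.
Import Order.TTheory GRing.Theory Num.Theory.
Import numFieldNormedType.Exports.
Local Open Scope classical_set_scope.
Local Open Scope ring_scope.

(* For a local score phi(x, e_k) = g(x_k), d_phi(C, Q) is the sum over k of
   g(C_k) Q_k - g(Q_k) Q_k.  As C_k = E[Q_k | S_k] is a measurable function
   of S_k, so is g(C_k), and pulling out what is known gives
   E[g(C_k) Q_k] = E[g(C_k) C_k]; also E[-g(Q_k) Q_k] = E[W_k] for a version
   W_k of E[h_k(Q_k) | S_k].  So the k-th term has expectation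
   E[W_k - h_k(C_k)] = E[Var_{h_k}(Q_k | S_k)].  The pull-out identity
   E[a(S) U] = E[a(S) W] is a finite combination of the defining identities
   of W = E[U | S] when a is simple, and extends to measurable a by
   dominated convergence along simple functions bounded by |a|. *)

Import HBSimple HBNNSimple.

Section approx.
Context {R : realType} {d} {T : measurableType d}.

Lemma approximation_sfun_dominated (h : T -> R) : measurable_fun setT h ->
  exists g : {sfun T >-> R}^nat,
    (forall y, g ^~ y @ \oo --> h y) /\ (forall n y, `|g n y| <= `|h y|).
Proof.
move=> mh.
have mhp : measurable_fun setT (EFin \o h^\+).
  exact/measurable_EFinP/measurable_funrpos.
have mhn : measurable_fun setT (EFin \o h^\-).
  exact/measurable_EFinP/measurable_funrneg.
pose gp := nnsfun_approx measurableT mhp.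
pose gn := nnsfun_approx measurableT mhn.
exists (fun n => (gp n : {sfun T >-> R}) - (gn n : {sfun T >-> R})).
have gp_le n y : gp n y <= h^\+ y.
  rewrite -lee_fin /gp nnsfun_approxE; apply: le_approx => // ? _.
  by rewrite lee_fin funrpos_ge0.
have gn_le n y : gn n y <= h^\- y.
  rewrite -lee_fin /gn nnsfun_approxE; apply: le_approx => // ? _.
  by rewrite lee_fin funrneg_ge0.
split => [y|n y].
  have hE : h^\+ y - h^\- y = h y := congr1 (@^~ y) (funrposBneg h).
  rewrite -hE; apply: cvgB.
    apply: (fine_cvg (f := EFin \o gp ^~ y)).
    apply: cvg_nnsfun_approx => // ? _.
    by rewrite lee_fin funrpos_ge0.
  apply: (fine_cvg (f := EFin \o gn ^~ y)).
  apply: cvg_nnsfun_approx => // ? _.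
  by rewrite lee_fin funrneg_ge0.
rewrite sfunB -[`|h y|]/((Num.norm \o h) y) -funrposDneg.
rewrite (le_trans (ler_normB _ _)) // !ger0_norm //.
exact: lerD (gp_le n y) (gn_le n y).
Qed.
End approx.

Section dominated.
Context {R : realType} {d} {T : measurableType d}.
Context {mu : {measure set T -> \bar R}}.

Lemma cvg_integral_mul_dominated (u : (T -> R)^nat) (v V : T -> R) :
  (forall n, measurable_fun setT (u n)) -> measurable_fun setT V ->
  (forall x, u ^~ x @ \oo --> v x) -> (forall n x, `|u n x| <= `|v x|) ->
  mu.-integrable setT (fun x => (v x * V x)%:E) ->
  (\int[mu]_x (u n x * V x)%:E @[n --> \oo] --> \int[mu]_x (v x * V x)%:E)%E.
Proof.
move=> meas_u mV uv u_le ivV.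
have meas_uV n : measurable_fun setT (fun x => (u n x * V x)%:E).
  exact/measurable_EFinP/measurable_funM.
have cvg_uV : {ae mu, forall x, setT x ->
    (fun n => (u n x * V x)%:E) @ \oo --> (v x * V x)%:E}.
  apply: aeW => x _; apply: cvg_EFin; first exact: nearW.
  exact: cvgM (uv x) (cvg_cst (V x)).
have uV_le : {ae mu, forall x n, setT x ->
    (`|(u n x * V x)%:E| <= (abse \o (fun x => (v x * V x)%:E)) x)%E}.
  by apply: aeW => x n _ /=; rewrite lee_fin !normrM; exact: ler_wpM2r.
by case: (dominated_convergence measurableT meas_uV (measurable_int _ ivV)
  cvg_uV (integrable_abse ivV) uV_le).
Qed.
End dominated.

Section pull_out.
Context {R : realType} {d} {T : measurableType d}.
Context {mu : {measure set T -> \bar R}}.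
Context {d'} {T' : measurableType d'} {S : T -> T'}.
Hypothesis mS : measurable_fun setT S.

Lemma indic_comp_mulE (A : set T') (V : T -> R) :
  (fun x => (\1_A (S x) * V x)%:E) = ((EFin \o V) \_ (S @^-1` A))%E.
Proof.
apply/funext => x; rewrite /patch indicE.
rewrite -[x \in _]/(S x \in A).
by case: (S x \in A); rewrite ?mul1r ?mul0r.
Qed.

Context {U W : T -> R}.
Hypotheses (iU : mu.-integrable setT (EFin \o U))
  (iW : mu.-integrable setT (EFin \o W)).
Hypothesis UW_preimage : forall B, measurable B ->
  (\int[mu]_(x in S @^-1` B) (U x)%:E = \int[mu]_(x in S @^-1` B) (W x)%:E)%E.

Let integrable_indic_comp_mul A V : measurable A ->
  mu.-integrable setT (EFin \o V) ->
  mu.-integrable setT (fun x => (\1_A (S x) * V x)%:E).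
Proof.
move=> mA iV; have mSA : measurable (S @^-1` A).
  by rewrite -[_ @^-1` _]setTI; exact: mS.
rewrite indic_comp_mulE; apply/(integrable_mkcond _ mSA).1.
exact: integrableS iV.
Qed.

Lemma integral_sfun_comp_mul (a : {sfun T' >-> R}) :
  (\int[mu]_x (a (S x) * U x)%:E = \int[mu]_x (a (S x) * W x)%:E)%E.
Proof.
have [s aE] : exists s : seq R,
    forall y, a y = \sum_(i < size s) s`_i * \1_(a @^-1` [set s`_i]) y.
  by eexists; exact: fimfunEord.
have ma i : measurable (a @^-1` [set s`_i]) by exact: measurable_funPTI.
have expand V : mu.-integrable setT (EFin \o V) ->
    (\int[mu]_x (a (S x) * V x)%:E = \sum_(i < size s)
      (s`_i)%:E * \int[mu]_(x in S @^-1` (a @^-1` [set s`_i])) (V x)%:E)%E.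
  move=> iV; under eq_integral do rewrite aE mulr_suml -sumEFin.
  rewrite integral_sum //; last first.
    move=> i; under eq_fun do rewrite -mulrA EFinM.
    exact/integrableZl/integrable_indic_comp_mul.
  apply: eq_bigr => i _; rewrite [in RHS]integral_mkcond -indic_comp_mulE.
  rewrite -integralZl //; last exact: integrable_indic_comp_mul.
  by apply: eq_integral => x _; rewrite -mulrA EFinM.
rewrite !expand //; apply: eq_bigr => i _.
by rewrite UW_preimage // -[_ @^-1` _]setTI; exact: mS.
Qed.

Lemma integral_comp_mul (h : T' -> R) : measurable_fun setT h ->
  mu.-integrable setT (fun x => (h (S x) * U x)%:E) ->
  mu.-integrable setT (fun x => (h (S x) * W x)%:E) ->
  (\int[mu]_x (h (S x) * U x)%:E = \int[mu]_x (h (S x) * W x)%:E)%E.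
Proof.
move=> mh ihU ihW; have [g [g_cvg g_le]] := approximation_sfun_dominated h mh.
have mgS n : measurable_fun setT (fun x => g n (S x)).
  exact: measurableT_comp (measurable_funP (g n)) mS.
have cvg_g V : mu.-integrable setT (EFin \o V) ->
    mu.-integrable setT (fun x => (h (S x) * V x)%:E) ->
    (\int[mu]_x (g n (S x) * V x)%:E @[n --> \oo] -->
     \int[mu]_x (h (S x) * V x)%:E)%E.
  move=> iV; apply: cvg_integral_mul_dominated => //.
  exact/measurable_EFinP/(measurable_int _ iV).
have := cvg_g U iU ihU; under eq_fun do rewrite integral_sfun_comp_mul.
by move/cvg_unique; apply => //; exact: cvg_g.
Qed.
End pull_out.

Section cond_exp.
Context {R : realType} {d} {T : measurableType d} {P : probability T R}.
Context {d'} {T' : measurableType d'} {V : T -> T'}.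

Lemma integral_cond_exp {U W : T -> R} : is_cond_exp P V U W ->
  (\int[P]_x (U x)%:E = \int[P]_x (W x)%:E)%E.
Proof.
by case=> _ [_ [_ /(_ setT measurableT)]]; rewrite preimage_setT.
Qed.

Lemma cond_exp_pull_out {U W : T -> R} {h : R -> R} :
  measurable_fun setT V -> measurable_fun setT h -> is_cond_exp P V U W ->
  P.-integrable setT (fun x => (h (W x) * U x)%:E) ->
  P.-integrable setT (fun x => (h (W x) * W x)%:E) ->
  (\int[P]_x (h (W x) * U x)%:E = \int[P]_x (h (W x) * W x)%:E)%E.
Proof.
move=> mV mh [iU [iW [[w [mw WE]] UW]]] ihU ihW; subst W.
have mhw := measurableT_comp mh mw.
by have := integral_comp_mul mV iU iW UW (h \o w) mhw ihU ihW.
Qed.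
End cond_exp.

Lemma d_phi_local {R : realType} {K : nat} {phi : ('I_K -> R) -> 'I_K -> R}
    {g : R -> R} : (forall x k, phi x k = g (x k)) ->
  forall P q, d_phi phi P q = \sum_(k < K) (g (P k) * q k - g (q k) * q k).
Proof.
move=> phiE P q; rewrite /d_phi /s_phi -sumrB.
by apply: eq_bigr => k _; rewrite !phiE.
Qed.

Theorem lemma5 (R : realType) (K : nat)
  (d : measure_display) (Omega : measurableType d) (P : probability Omega R)
  (dX : measure_display) (XX : measurableType dX)
  (X : Omega -> XX) (Y : Omega -> 'I_K)
  (f : 'I_K -> XX -> R)
  (Q C : 'I_K -> Omega -> R)
  (g : R -> R) (phi : ('I_K -> R) -> 'I_K -> R) :
  (* the data *)
  measurable_fun setT X ->
  (forall k, measurable (Y @^-1` [set k])) ->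
  (forall k, measurable_fun setT (f k)) ->
  (* f is a classifier: its output lies in the probability simplex *)
  (forall x k, 0 <= f k x) -> (forall x, \sum_(k < K) f k x = 1) ->
  (* Q_k = P(Y = e_k | X) *)
  (forall k, is_cond_exp P X (\1_(Y @^-1` [set k])) (Q k)) ->
  (* C_k = E[Q_k | S_k], where S_k = f_k(X) *)
  (forall k, is_cond_exp P (fun w => f k (X w)) (Q k) (C k)) ->
  (* phi(x, e_k) = g(x_k) *)
  measurable_fun setT g ->
  (forall (x : 'I_K -> R) k, phi x k = g (x k)) ->
  (* the required expectations exist *)
  P.-integrable setT (fun w => (d_phi phi (fun k => C k w) (fun k => Q k w))%:E) ->
  (forall k, P.-integrable setT (fun w => (g (C k w) * Q k w)%:E)) ->
  (forall k, P.-integrable setT (fun w => (- g (C k w) * C k w)%:E)) ->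
  (* for every version W_k of E[h_k(Q_k) | S_k], with h_k(q) = - g(q) q *)
  forall W : 'I_K -> Omega -> R,
  (forall k, is_cond_exp P (fun w => f k (X w)) (fun w => - g (Q k w) * Q k w) (W k)) ->
  (\int[P]_w (d_phi phi (fun k => C k w) (fun k => Q k w))%:E
   = \sum_(k < K) \int[P]_w (Var_f (fun q => - g q * q) (W k) (C k) w)%:E)%E.
Proof.
move=> mX _ mf _ _ _ hC mg phiE _ igCQ igNCC W hW.
have mS k : measurable_fun setT (fun w => f k (X w)).
  exact: measurableT_comp (mf k) mX.
have igQQ k : P.-integrable setT (fun w => (- g (Q k w) * Q k w)%:E).
  by case: (hW k).
have iW k : P.-integrable setT (fun w => (W k w)%:E) by case: (hW k) => _ [].
have igCC k : P.-integrable setT (fun w => (g (C k w) * C k w)%:E).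
  by under eq_fun do rewrite -[_ * _]opprK -mulNr EFinN; exact: integrableN.
under eq_integral do rewrite (d_phi_local phiE) -sumEFin.
under eq_integral do under eq_bigr do rewrite -mulNr EFinD.
rewrite integral_sum // => [|k]; last exact: integrableD.
apply: eq_bigr => k _; rewrite integralD //.
under [RHS]eq_integral do rewrite /Var_f mulNr opprK EFinD.
rewrite integralD // (cond_exp_pull_out (mS k) mg (hC k)) //.
rewrite (integral_cond_exp (hW k)).
exact: addeC.
Qed.
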